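(* Let $K$ be an algebraically closed field, $R=K[x_1,\dots,x_N]$, and let $P$ be a finite set of monomials of $R$. Suppose $P_0,\dots,P_r\subseteq P$ satisfy: (i) $\bigcup_{i=0}^r P_i=P$; (ii) $P_0$ has exactly one element; (iii) for every $i$ with $0<i\le r$ and any two distinct $p,p''\in P_i$, there exist $i'$ with $0\le i'<i$ and $p'\in P_{i'}$ such that $p'$ divides $pp''$. Then $G=P$ and $S_i=P_i$ ($i=0,\dots,r$) satisfy hypotheses (i)–(iii) of the following statement: (i) $\bigcup S_i=G$; (ii) $|S_0|=1$; (iii) the recursive procedure — 0. set $T=S_0$; 1. pick an indeterminate $z$ dividing the only element of $T$; 2. remove all monomials divisible by $z$ from every $S_i$ and from $G$; 3. if no element of $G$ is left, end, otherwise pick $j$ such that exactly one element is left in $S_j$ and set $T$ to the current $S_j$; 4. go to 1 — can always be performed and always terminates, regardless of the choices of $z$ and $j$.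
   Context: Monomials are products of indeterminates (with coefficient 1). ''Can always be performed'' means that whenever monomials of $G$ remain after step 2, some $S_j$ has exactly one remaining element. *)

From HB Require Import structures.
From mathcomp Require Import all_boot all_order all_algebra.
From mathcomp Require Import finmap.
From mathcomp Require Import mpoly.
Set Implicit Arguments. Unset Strict Implicit. Unset Printing Implicit Defensive.
Local Open Scope fset_scope.

(* A monomial x^m of R = K[x_1..x_N] is represented by its exponent vector
   m : 'X_{1..N} (multinomials), i.e. the monomial 'X_[m] of {mpoly K[N]}.
   Product of monomials = (m1 + m2)%MM, divisibility 'X_[m1] | 'X_[m2]
   <=> (m1 <= m2)%MM (pointwise). Indeterminate x_z (z : 'I_N) divides x^m
   iff 0 < m z. *)

Definition mon_dvd (N : nat) (m1 m2 : 'X_{1..N}) : bool := (m1 <= m2)%MM.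
Definition mon_mul (N : nat) (m1 m2 : 'X_{1..N}) : 'X_{1..N} := (m1 + m2)%MM.

Definition var_dvd (N : nat) (z : 'I_N) (m : 'X_{1..N}) : bool := 0 < m z.

Definition remaining (N : nat) (zs : seq 'I_N) (A : {fset 'X_{1..N}}) :
  {fset 'X_{1..N}} := [fset m in A | all (fun z => ~~ var_dvd z m) zs].

(* The procedure. A state is (zs, t): zs = indeterminates chosen in step 1
   so far (cumulative removal), t = the only element of the current T.
   [init S s]: step 0, T = S_0 = [fset t]. *)
Definition proc_init (N r : nat) (S : 'I_r.+1 -> {fset 'X_{1..N}})
  (s : seq 'I_N * 'X_{1..N}) : Prop :=
  s.1 = [::] /\ S ord0 = [fset s.2].

(* One full round: step 1 picks z dividing the element of T, step 2 removes
   monomials divisible by z, step 3: G nonempty, and some current S_j has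
   exactly one element t', which becomes T. *)
Definition proc_step (N r : nat) (G : {fset 'X_{1..N}})
  (S : 'I_r.+1 -> {fset 'X_{1..N}}) (s s' : seq 'I_N * 'X_{1..N}) : Prop :=
  exists z : 'I_N, var_dvd z s.2 /\ s'.1 = rcons s.1 z /\
    remaining (rcons s.1 z) G != fset0 /\
    exists j : 'I_r.+1, remaining (rcons s.1 z) (S j) = [fset s'.2].

Inductive proc_reach (N r : nat) (G : {fset 'X_{1..N}})
  (S : 'I_r.+1 -> {fset 'X_{1..N}}) : seq 'I_N * 'X_{1..N} -> Prop :=
| reach_init s : proc_init S s -> proc_reach G S s
| reach_step s s' : proc_reach G S s -> proc_step G S s s' -> proc_reach G S s'.

Definition procedure_hyps (N r : nat) (G : {fset 'X_{1..N}})
  (S : 'I_r.+1 -> {fset 'X_{1..N}}) : Prop :=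
  (\big[fsetU/fset0]_(i < r.+1) S i = G)
  /\ #|` S ord0| = 1
  (* (iii) can always be performed: whenever monomials of G remain after
     step 2, some S_j has exactly one remaining element *)
  /\ (forall s, proc_reach G S s -> forall z : 'I_N, var_dvd z s.2 ->
        remaining (rcons s.1 z) G != fset0 ->
        exists j : 'I_r.+1, #|` remaining (rcons s.1 z) (S j)| = 1)
  (* (iii) always terminates: there is no infinite run *)
  /\ ~ (exists f : nat -> seq 'I_N * 'X_{1..N},
          proc_init S (f 0) /\ forall n, proc_step G S (f n) (f n.+1)).

From HB Require Import structures.
From mathcomp Require Import all_boot all_order all_algebra.
From mathcomp Require Import finmap.
From mathcomp Require Import mpoly.
Set Implicit Arguments. Unset Strict Implicit. Unset Printing Implicit Defensive.
Local Open Scope fset_scope.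

(* Feasibility: if some S_i still has a surviving monomial, take the least such
   i.  For i > 0 it cannot have two survivors p, p'', since some p' in an
   earlier S_i' divides p p'', and p' survives because every removed variable
   misses both p and p''; for i = 0 there is at most one survivor anyway.
   Termination: the element of T survived the removal of all variables chosen
   so far, so the variable chosen next is new; as there are only N variables,
   no run has more than N rounds. *)

Lemma cardfs_gt1P (K : choiceType) (A : {fset K}) :
  1 < #|` A| -> exists p p'', [/\ p \in A, p'' \in A & p != p''].
Proof.
case: (fset_0Vmem A) => [->|[p pA]]; first by rewrite cardfs0.
rewrite (cardfsD1 p) pA ltnS cardfs_gt0 => /fset0Pn [p'' ].
by rewrite in_fsetD1 => /andP [p''p p''A]; exists p, p''; rewrite eq_sym.
Qed.

Section Avoidance.

Variable N : nat.
Implicit Types (zs : seq 'I_N) (m : 'X_{1..N}) (A : {fset 'X_{1..N}}).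

Definition avoids zs m : bool := all (fun z => ~~ var_dvd z m) zs.

Lemma mem_remaining zs A m : (m \in remaining zs A) = (m \in A) && avoids zs m.
Proof. by rewrite /remaining !inE. Qed.

Lemma avoids_dvd_mul zs p p'' p' :
  avoids zs p -> avoids zs p'' -> mon_dvd p' (mon_mul p p'') -> avoids zs p'.
Proof.
move=> /allP zs_p /allP zs_p'' /forallP dvd; apply/allP => z zs_z.
have /(_ z) := dvd; rewrite mnmDE.
move: (zs_p z zs_z) (zs_p'' z zs_z); rewrite /var_dvd -!eqn0Ngt.
by move=> /eqP -> /eqP ->; rewrite leqn0.
Qed.

End Avoidance.

Section Feasibility.

Variables (N r : nat) (Ps : 'I_r.+1 -> {fset 'X_{1..N}}).
Hypothesis card_Ps0 : #|` Ps ord0| = 1.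
Hypothesis Ps_descent : forall i : 'I_r.+1, 0 < i -> forall p p'',
  p \in Ps i -> p'' \in Ps i -> p != p'' ->
  exists i' : 'I_r.+1, i' < i /\ exists2 p', p' \in Ps i' & mon_dvd p' (mon_mul p p'').

Lemma remaining_descent zs (i : 'I_r.+1) :
  1 < #|` remaining zs (Ps i)| ->
  exists2 i' : 'I_r.+1, i' < i & remaining zs (Ps i') != fset0.
Proof.
move=> card_gt1; have [i0|i_gt0] := posnP i.
  have i_ord0 : i = ord0 by apply: val_inj.
  move: card_gt1; rewrite i_ord0 ltnNge.
  by rewrite -card_Ps0 fsubset_leq_card ?fset_sub.
have [p [p'' [pi p''i pp'']]] := cardfs_gt1P card_gt1.
move: pi p''i; rewrite !mem_remaining => /andP [pi zs_p] /andP [p''i zs_p''].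
have [i' [lt_i'i [p' p'i' dvd]]] := Ps_descent i_gt0 pi p''i pp''.
exists i' => //; apply/fset0Pn; exists p'.
by rewrite mem_remaining p'i' (avoids_dvd_mul zs_p zs_p'' dvd).
Qed.

Lemma exists_singleton_remaining zs (i : 'I_r.+1) :
  remaining zs (Ps i) != fset0 ->
  exists j : 'I_r.+1, #|` remaining zs (Ps j)| = 1.
Proof.
move: {2}(val i) (erefl (val i)) => n; elim/ltn_ind: n i => n IH i i_n nonempty.
have [card_gt1|] := ltnP 1 #|` remaining zs (Ps i)|.
  have [i' lt_i'i nonempty'] := remaining_descent card_gt1.
  by rewrite i_n in lt_i'i; apply: IH lt_i'i i' erefl nonempty'.
by rewrite leq_eqVlt ltnS leqn0 cardfs_eq0 (negPf nonempty) orbF => /eqP; exists i.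
Qed.

End Feasibility.

Section Termination.

Variables (N r : nat) (G : {fset 'X_{1..N}}) (S : 'I_r.+1 -> {fset 'X_{1..N}}).
Implicit Types s : seq 'I_N * 'X_{1..N}.

Lemma proc_step_avoids s s' : proc_step G S s s' -> avoids s'.1 s'.2.
Proof.
case=> z [_ [-> [_ [j S_j]]]].
have : s'.2 \in remaining (rcons s.1 z) (S j) by rewrite S_j fset11.
by rewrite mem_remaining => /andP [].
Qed.

Lemma proc_step_uniq s s' :
  proc_step G S s s' -> avoids s.1 s.2 -> uniq s.1 -> uniq s'.1.
Proof.
case=> z [z_s [-> _]] /allP avoid uniq_s.
by rewrite rcons_uniq uniq_s andbT; apply/negP => /avoid; rewrite z_s.
Qed.

Lemma proc_step_size s s' : proc_step G S s s' -> size s'.1 = (size s.1).+1.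
Proof. by case=> z [_ [-> _]]; rewrite size_rcons. Qed.

Variable f : nat -> seq 'I_N * 'X_{1..N}.
Hypothesis f_init : proc_init S (f 0).
Hypothesis f_step : forall n, proc_step G S (f n) (f n.+1).

Lemma proc_run_avoids n : avoids (f n).1 (f n).2.
Proof. by case: n => [|n]; [rewrite f_init.1 | exact: proc_step_avoids (f_step n)]. Qed.

Lemma proc_run_uniq_size n : uniq (f n).1 /\ size (f n).1 = n.
Proof.
elim: n => [|n [uniq_n size_n]]; first by rewrite f_init.1.
split; first exact: proc_step_uniq (f_step n) (proc_run_avoids n) uniq_n.
by rewrite (proc_step_size (f_step n)) size_n.
Qed.

End Termination.

Lemma uniq_size_ord n (s : seq 'I_n) : uniq s -> size s <= n.
Proof. by move=> /card_uniqP <-; rewrite -[n in _ <= n]card_ord max_card. Qed.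

Lemma proc_run_finite N r (G : {fset 'X_{1..N}}) (S : 'I_r.+1 -> {fset 'X_{1..N}}) :
  ~ exists f : nat -> seq 'I_N * 'X_{1..N},
      proc_init S (f 0) /\ forall n, proc_step G S (f n) (f n.+1).
Proof.
case=> f [f_init f_step].
have [uniq_f size_f] := proc_run_uniq_size f_init f_step N.+1.
by move: (uniq_size_ord uniq_f); rewrite size_f ltnn.
Qed.

Theorem mainTheorem3 (K : closedFieldType) (N r : nat)
  (P : {fset 'X_{1..N}}) (Ps : 'I_r.+1 -> {fset 'X_{1..N}}) :
  (forall i, Ps i `<=` P) ->
  \big[fsetU/fset0]_(i < r.+1) Ps i = P ->
  #|` Ps ord0| = 1 ->
  (forall i : 'I_r.+1, 0 < i -> forall p p'', p \in Ps i -> p'' \in Ps i ->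
     p != p'' ->
     exists i' : 'I_r.+1, i' < i /\
       exists2 p', p' \in Ps i' & mon_dvd p' (mon_mul p p'')) ->
  procedure_hyps P Ps.
Proof.
move=> _ cover card_Ps0 Ps_descent.
split=> //; split=> //; split; last exact: proc_run_finite.
move=> s _ z _ /fset0Pn [m]; rewrite mem_remaining -cover.
case/andP=> /bigfcupP [i _ m_i] avoid_m.
apply: (exists_singleton_remaining card_Ps0 Ps_descent (i := i)).
by apply/fset0Pn; exists m; rewrite mem_remaining m_i.
Qed.
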